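(* Let $n,p$ be positive integers, $X\in\mathbb{R}^{n\times p}$, $\mathbf y\in\mathbb{R}^n$ and $\delta>0$, and let $\mathbf t\in[0,1)^p$. Then \[ (L_{\mathbf t})_{+}=\frac1n\left[(T_{\mathbf t})_{+}(X^\top X)_{+}(T_{\mathbf t})_{+}+\delta\big(I-(T_{\mathbf t})_{+}^2\big)\right]. \] Furthermore: (i) $(L_{\mathbf t}^{-1})_0=\frac{n}{\delta}I$ and $(L_{\mathbf t}^{-1})_{+}=\big((L_{\mathbf t})_{+}\big)^{-1}$; (ii) $(\widetilde{\boldsymbol\beta}_{\mathbf t})_0=\mathbf 0$ and $(\widetilde{\boldsymbol\beta}_{\mathbf t})_{+}=\big((L_{\mathbf t})_{+}\big)^{-1}\left((\mathbf t)_{+}\odot\left(\frac{X^\top\mathbf y}{n}\right)_{+}\right)$; (iii) $(\mathbf c_{\mathbf t})_0=\mathbf 0$ and $(\mathbf c_{\mathbf t})_{+}=\big((L_{\mathbf t})_{+}\big)^{-1}\big((\mathbf t)_{+}\odot(\mathbf a_{\mathbf t})_{+}\big)$.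
   Context: For $\mathbf t\in[0,1)^p$, $T_{\mathbf t}=\mathrm{Diag}(t_1,\dots,t_p)$, $X_{\mathbf t}=XT_{\mathbf t}$, $L_{\mathbf t}=\frac1n[X_{\mathbf t}^\top X_{\mathbf t}+\delta(I-T_{\mathbf t}^2)]$ (invertible for such $\mathbf t$), $\widetilde{\boldsymbol\beta}_{\mathbf t}=L_{\mathbf t}^{-1}(X_{\mathbf t}^\top\mathbf y/n)$, $\mathbf a_{\mathbf t}=\frac{X^\top X}{n}(\mathbf t\odot\widetilde{\boldsymbol\beta}_{\mathbf t})-\frac{X^\top\mathbf y}{n}$ and $\mathbf c_{\mathbf t}=L_{\mathbf t}^{-1}(\mathbf t\odot\mathbf a_{\mathbf t})$, where $\odot$ is the element-wise product and $I$ denotes an identity matrix of the appropriate size. Let $\mathscr P=\{1,\dots,p\}$ and $\mathscr Z_{\mathbf t}=\{j\in\mathscr P: t_j=0\}$. For $\mathbf u\in\mathbb{R}^p$, $(\mathbf u)_{+}$ (resp. $(\mathbf u)_0$) is the vector obtained by deleting the entries with indices in $\mathscr Z_{\mathbf t}$ (resp. in $\mathscr P\setminus\mathscr Z_{\mathbf t}$). For a $p\times p$ matrix $A$, $(A)_{+}$ (resp. $(A)_0$) is the matrix obtained by deleting the rows and columns with indices in $\mathscr Z_{\mathbf t}$ (resp. in $\mathscr P\setminus\mathscr Z_{\mathbf t}$). *)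

From HB Require Import structures.
From mathcomp Require Import all_boot all_order all_algebra.
Set Implicit Arguments. Unset Strict Implicit. Unset Printing Implicit Defensive.
Import Order.TTheory GRing.Theory Num.Theory.
Local Open Scope ring_scope.

Section Defs.
Variables (R : realFieldType) (n p : nat).
Variables (X : 'M[R]_(n, p)) (y : 'cV[R]_n) (delta : R) (t : 'cV[R]_p).

Definition hadamard (k : nat) (u v : 'cV[R]_k) : 'cV[R]_k :=
  \col_i (u i 0 * v i 0).

Definition Tmat : 'M[R]_p := diag_mx t^T.
Definition Xt : 'M[R]_(n, p) := X *m Tmat.
Definition Lt : 'M[R]_p :=
  (n%:R)^-1 *: (Xt^T *m Xt + delta *: (1%:M - Tmat *m Tmat)).
Definition betat : 'cV[R]_p := invmx Lt *m ((n%:R)^-1 *: (Xt^T *m y)).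
Definition at_ : 'cV[R]_p :=
  ((n%:R)^-1 *: (X^T *m X)) *m hadamard t betat - (n%:R)^-1 *: (X^T *m y).
Definition ct : 'cV[R]_p := invmx Lt *m hadamard t at_.

Definition Zset : {set 'I_p} := [set j | t j 0 == 0].
Definition Pset : {set 'I_p} := ~: Zset.
End Defs.

(* (u)_S : keep the entries indexed by S (in increasing order) *)
Definition subv (R : Type) (p : nat) (S : {set 'I_p}) (u : 'cV[R]_p)
  : 'cV[R]_#|S| := \col_(i < #|S|) u (enum_val i) 0.
Definition subm (R : Type) (p : nat) (S : {set 'I_p}) (A : 'M[R]_p)
  : 'M[R]_#|S| := \matrix_(i < #|S|, j < #|S|) A (enum_val i) (enum_val j).

(** For [j] in [Z_t] the [j]-th row of [L_t] is [(delta/n) e_j^T], since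
    [t_j = 0].  If the rows of an invertible [A] indexed by [Z] are [a e_j^T],
    then so are the rows of [A^{-1}] with [a^{-1}], and, the [(Z, P \ Z)]-block
    of [A] being zero, the [P \ Z]-block of [A^{-1}] is the inverse of that of
    [A].  Both [beta~_t] and [c_t] are of the form [L_t^{-1} (t ⊙ u)], and
    [t ⊙ u] vanishes on [Z_t].  Finally [L_t] is invertible because
    [n L_t = X_t^T X_t + D] with [D] diagonal and positive, as [0 <= t_j < 1]. *)

From HB Require Import structures.
From mathcomp Require Import all_boot all_order all_algebra.
From mathcomp Require Import ring lra.
Set Implicit Arguments. Unset Strict Implicit. Unset Printing Implicit Defensive.
Import Order.TTheory GRing.Theory Num.Theory.
Local Open Scope ring_scope.

Section Restriction.
Variables (R : pzRingType) (p : nat) (S : {set 'I_p}).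
Implicit Types (A B : 'M[R]_p) (v : 'cV[R]_p).

Lemma submD A B : subm S (A + B) = subm S A + subm S B.
Proof. by apply/matrixP => i j; rewrite !mxE. Qed.

Lemma submB A B : subm S (A - B) = subm S A - subm S B.
Proof. by apply/matrixP => i j; rewrite !mxE. Qed.

Lemma submZ a A : subm S (a *: A) = a *: subm S A.
Proof. by apply/matrixP => i j; rewrite !mxE. Qed.

Lemma subm1 : subm S (1%:M : 'M[R]_p) = 1%:M.
Proof. by apply/matrixP => i j; rewrite !mxE (inj_eq enum_val_inj). Qed.

Lemma subm_mulmx A B :
  (forall i j k, i \in S -> j \in S -> k \notin S -> A i k * B k j = 0) ->
  subm S (A *m B) = subm S A *m subm S B.
Proof.
move=> AB0; apply/matrixP => i j; rewrite !mxE.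
rewrite (bigID (mem S)) /= [X in _ + X]big1 ?addr0 => [|k kS]; last first.
  by rewrite AB0 ?enum_valP.
by rewrite big_enum_val; apply: eq_bigr => k _; rewrite !mxE.
Qed.

Lemma subm_mul_diagl A B : is_diag_mx A -> subm S (A *m B) = subm S A *m subm S B.
Proof.
move=> /is_diag_mxP A_diag; apply: subm_mulmx => i j k iS _ kS.
by rewrite A_diag ?mul0r //; apply: contraNneq kS => /val_inj <-.
Qed.

Lemma subm_mul_diagr A B : is_diag_mx B -> subm S (A *m B) = subm S A *m subm S B.
Proof.
move=> /is_diag_mxP B_diag; apply: subm_mulmx => i j k _ jS kS.
by rewrite B_diag ?mulr0 //; apply: contraNneq kS => /val_inj ->.
Qed.

Lemma subv_mulmx A v :
  (forall i k, i \in S -> k \notin S -> A i k * v k 0 = 0) ->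
  subv S (A *m v) = subm S A *m subv S v.
Proof.
move=> Av0; apply/matrixP => i j; rewrite !mxE ord1.
rewrite (bigID (mem S)) /= [X in _ + X]big1 ?addr0 => [|k kS]; last first.
  by rewrite Av0 ?enum_valP.
by rewrite big_enum_val; apply: eq_bigr => k _; rewrite !mxE.
Qed.

End Restriction.

Section ScalarRowsInverse.
Variables (R : comUnitRingType) (p : nat) (Z : {set 'I_p}) (A : 'M[R]_p) (a : R).
Hypotheses (A_unit : A \in unitmx) (a_unit : a \is a GRing.unit).
Hypothesis A_scalar_rows : forall j k, j \in Z -> A j k = a *+ (j == k).

Lemma invmx_scalar_rows j k : j \in Z -> invmx A j k = a^-1 *+ (j == k).
Proof.
move=> jZ; have := congr1 (fun M : 'M[R]_p => M j k) (mulmxV A_unit).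
rewrite !mxE (bigD1 j) //= big1 ?addr0 => [|m mj]; last first.
  by rewrite A_scalar_rows // eq_sym (negbTE mj) mulr0n mul0r.
rewrite A_scalar_rows // eqxx mulr1n => e.
by rewrite -mulr_natr -e mulKr.
Qed.

Lemma subm_invmx_scalar : subm Z (invmx A) = a^-1 *: 1%:M.
Proof.
apply/matrixP => i j; rewrite !mxE invmx_scalar_rows ?enum_valP //.
by rewrite (inj_eq enum_val_inj) mulr_natr.
Qed.

Lemma subm_invmx_compl : subm (~: Z) (invmx A) = invmx (subm (~: Z) A).
Proof.
have inv_l : subm (~: Z) (invmx A) *m subm (~: Z) A = 1%:M.
  rewrite -subm_mulmx ?mulVmx ?subm1 // => i j k _ jZ; rewrite in_setC negbK => kZ.
  rewrite A_scalar_rows // (_ : (k == j) = false) ?mulr0n ?mulr0 //.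
  by apply: contraTF jZ => /eqP <-; rewrite in_setC kZ.
have [_ subA_unit] := mulmx1_unit inv_l.
by rewrite -[LHS]mulmx1 -(mulmxV subA_unit) mulmxA inv_l mul1mx.
Qed.

Section VanishingOnZ.
Variable v : 'cV[R]_p.
Hypothesis v_Z : forall j, j \in Z -> v j 0 = 0.

Lemma subv_invmx_mul : subv Z (invmx A *m v) = 0.
Proof.
rewrite subv_mulmx => [|i k iZ kZ]; last first.
  rewrite invmx_scalar_rows // (_ : (i == k) = false) ?mulr0n ?mul0r //.
  by apply: contraNF kZ => /eqP <-.
rewrite [subv Z v](_ : _ = 0) ?mulmx0 //.
by apply/matrixP => i j; rewrite !mxE v_Z ?enum_valP.
Qed.

Lemma subv_invmx_mul_compl :
  subv (~: Z) (invmx A *m v) = invmx (subm (~: Z) A) *m subv (~: Z) v.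
Proof.
rewrite subv_mulmx -?subm_invmx_compl // => i k _.
by rewrite in_setC negbK => /v_Z ->; rewrite mulr0.
Qed.

End VanishingOnZ.
End ScalarRowsInverse.

Lemma unitmx_gram_add_diag (R : realFieldType) m p (M : 'M[R]_(m, p)) (d : 'rV[R]_p) :
  (forall j, 0 < d 0 j) -> M^T *m M + diag_mx d \in unitmx.
Proof.
move=> d_gt0; rewrite unitmxE unitfE; apply/negP => /det0P[v v_neq0 v_ker].
pose w := M *m v^T.
have quad : (v *m (M^T *m M + diag_mx d) *m v^T) 0 0
    = \sum_i w i 0 ^+ 2 + \sum_j d 0 j * v 0 j ^+ 2.
  have gram : v *m (M^T *m M) *m v^T = w^T *m w by rewrite trmx_mul trmxK !mulmxA.
  rewrite mulmxDr mulmxDl gram mxE mul_mx_diag; congr (_ + _); rewrite mxE.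
    by apply: eq_bigr => i _; rewrite mxE expr2.
  by apply: eq_bigr => j _; rewrite !mxE expr2 mulrCA mulrA.
have dv_ge0 j : 0 <= d 0 j * v 0 j ^+ 2 by rewrite mulr_ge0 ?sqr_ge0 ?ltW.
have w_ge0 : 0 <= \sum_i w i 0 ^+ 2 by apply: sumr_ge0 => i _; exact: sqr_ge0.
have dv_sum_ge0 : 0 <= \sum_j d 0 j * v 0 j ^+ 2 by exact: sumr_ge0.
move: quad; rewrite v_ker mul0mx mxE => /esym/eqP.
rewrite paddr_eq0 // => /andP[_ /eqP dv0].
move/eqP: v_neq0; apply; apply/matrixP => i j; rewrite ord1 mxE.
have /eqP := psumr_eq0P (fun j _ => dv_ge0 j) dv0 (i := j) isT.
by rewrite mulf_eq0 (gt_eqF (d_gt0 j)) sqrf_eq0 => /eqP.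
Qed.

Section LtStructure.
Variables (R : realFieldType) (n p : nat) (X : 'M[R]_(n, p)) (y : 'cV[R]_n).
Variables (delta : R) (t : 'cV[R]_p).

Lemma tr_Tmat : (Tmat t)^T = Tmat t.
Proof. exact: tr_diag_mx. Qed.

Lemma mul_Tmat (u : 'cV[R]_p) : Tmat t *m u = hadamard t u.
Proof. by apply/matrixP => i j; rewrite mul_diag_mx !mxE ord1. Qed.

Lemma hadamard_Zset (u : 'cV[R]_p) j : j \in Zset t -> hadamard t u j 0 = 0.
Proof. by rewrite inE mxE => /eqP ->; rewrite mul0r. Qed.

Lemma subv_hadamard (S : {set 'I_p}) (u v : 'cV[R]_p) :
  subv S (hadamard u v) = hadamard (subv S u) (subv S v).
Proof. by apply/matrixP => i j; rewrite !mxE. Qed.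

Lemma Lt_Tmat : Lt X delta t =
  n%:R^-1 *: (Tmat t *m (X^T *m X) *m Tmat t + delta *: (1%:M - Tmat t *m Tmat t)).
Proof. by rewrite /Lt /Xt trmx_mul tr_Tmat !mulmxA. Qed.

Lemma Lt_gram : Lt X delta t =
  n%:R^-1 *: ((Xt X t)^T *m Xt X t + diag_mx (\row_j (delta * (1 - t j 0 ^+ 2)))).
Proof.
rewrite /Lt; congr (_ *: (_ + _)); apply/matrixP => i j.
rewrite /Tmat mul_diag_mx !mxE.
by case: eqP => _; rewrite ?mulr1n ?mulr0n; ring.
Qed.

Lemma Lt_row_Zset j k : j \in Zset t -> Lt X delta t j k = (n%:R^-1 * delta) *+ (j == k).
Proof.
rewrite inE => /eqP tj0; rewrite Lt_gram /Xt /Tmat mul_mx_diag !mxE.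
rewrite big1 => [|i _]; last by rewrite !mxE tj0 mulr0 mul0r.
by rewrite tj0 add0r expr0n /= subr0 mulr1 mulrnAr.
Qed.

Lemma Lt_unit : (0 < n)%N -> 0 < delta -> (forall j, 0 <= t j 0 /\ t j 0 < 1) ->
  Lt X delta t \in unitmx.
Proof.
move=> n_gt0 delta_gt0 t01; rewrite Lt_gram unitmxZ; last first.
  by rewrite unitfE invr_eq0 pnatr_eq0 -lt0n.
apply: unitmx_gram_add_diag => j; rewrite mxE.
by have [t0 t1] := t01 j; apply: mulr_gt0 => //; nra.
Qed.

Lemma betatE :
  betat X y delta t = invmx (Lt X delta t) *m hadamard t (n%:R^-1 *: (X^T *m y)).
Proof. by rewrite /betat /Xt trmx_mul tr_Tmat -mulmxA scalemxAr mul_Tmat. Qed.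

End LtStructure.

Theorem theorem6 (R : realFieldType) (n p : nat)
  (X : 'M[R]_(n, p)) (y : 'cV[R]_n) (delta : R) (t : 'cV[R]_p) :
  (0 < n)%N -> (0 < p)%N -> 0 < delta ->
  (forall j : 'I_p, 0 <= t j 0 /\ t j 0 < 1) ->
  let P := Pset t in
  let Z := Zset t in
  let L := Lt X delta t in
  let Tp := subm P (Tmat t) in
  subm P L =
    (n%:R)^-1 *: (Tp *m subm P (X^T *m X) *m Tp + delta *: (1%:M - Tp *m Tp))
  /\ (subm Z (invmx L) = (n%:R / delta) *: 1%:M
      /\ subm P (invmx L) = invmx (subm P L))
  /\ (subv Z (betat X y delta t) = 0
      /\ subv P (betat X y delta t) =
         invmx (subm P L) *m hadamard (subv P t) (subv P ((n%:R)^-1 *: (X^T *m y))))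
  /\ (subv Z (ct X y delta t) = 0
      /\ subv P (ct X y delta t) =
         invmx (subm P L) *m hadamard (subv P t) (subv P (at_ X y delta t))).
Proof.
move=> n_gt0 _ delta_gt0 t01 P Z L Tp.
have L_unit : L \in unitmx by exact: Lt_unit.
have a_unit : n%:R^-1 * delta \is a GRing.unit.
  by rewrite unitfE mulf_neq0 ?invr_eq0 ?pnatr_eq0 -?lt0n ?gt_eqF.
have Z_rows := Lt_row_Zset X delta (t := t).
have inv_hadamard u : subv Z (invmx L *m hadamard t u) = 0 /\
    subv P (invmx L *m hadamard t u) =
    invmx (subm P L) *m hadamard (subv P t) (subv P u).
  have tu_Z := hadamard_Zset (t := t) u.
  split; first exact: (subv_invmx_mul L_unit a_unit Z_rows tu_Z).
  by rewrite -subv_hadamard /P /Pset; exact: (subv_invmx_mul_compl L_unit Z_rows tu_Z).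
split.
  rewrite /L Lt_Tmat submZ submD submZ submB subm1.
  have T_diag : is_diag_mx (Tmat t) := diag_mx_is_diag _.
  by rewrite !(subm_mul_diagr _ _ T_diag) (subm_mul_diagl _ _ T_diag).
split; first split.
- by rewrite (subm_invmx_scalar L_unit a_unit Z_rows) invfM invrK mulrC.
- by rewrite /P /Pset; exact: (subm_invmx_compl L_unit Z_rows).
split; last exact: inv_hadamard.
by rewrite betatE; exact: inv_hadamard.
Qed.
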